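(* Setting as in the context. If $M$ and $N$ are $(A,B)$-adjacent, then there is no violation of $(M,N)$.
   Context: Let $K$ be a field and $\mathcal{Q}$ a bipartite quiver (every arrow goes from a source vertex to a sink vertex) with arrows $h_1,\dots,h_r$ and a nonnegative integer $m_\gamma$ attached to each vertex $\gamma$. For each $k$ let $X^{(k)}=[x^{(k)}_{ij}]$ be an $m_{{\rm t}(h_k)}\times m_{{\rm s}(h_k)}$ matrix of distinct independent variables (all variables distinct), in $K[X]$. For a sink $\alpha$, $A_\alpha$ is the horizontal concatenation $[X^{(r_1)}|\cdots|X^{(r_s)}]$ over the arrows $h_{r_1},\dots,h_{r_s}$ ($r_1<\dots<r_s$) with target $\alpha$; for a source $\beta$, $A_\beta$ is the vertical stacking of $X^{(r'_1)},\dots,X^{(r'_t)}$ over the arrows with source $\beta$ ($r'_1<\dots<r'_t$). Fix a lexicographic monomial order $>$ consistent with every $A_\gamma$ (in each $A_\gamma$ the variables strictly decrease from left to right along rows and from top to bottom along columns). Fix an arrow from a source $\gamma_2$ to a sink $\gamma_1$, let $A=A_{\gamma_1}$, $B=A_{\gamma_2}$, let $u,v$ be positive integers, and let $D_u(A)$, $D_v(B)$ be the sets of $u\times u$ minors of $A$ and $v\times v$ minors of $B$. Let $M\in D_u(A)$, $N\in D_v(B)$, $L=\mathrm{lcm}(\mathrm{LM}(M),\mathrm{LM}(N))=x_{p_1}\cdots x_{p_l}$ with $x_{p_1}>\dots>x_{p_l}$, where $p_i=(\alpha_i,\beta_i,r_i)$ means $x_{p_i}=x^{(r_i)}_{\alpha_i\beta_i}$;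 let $S_M=\{i:x_{p_i}\mid\mathrm{LM}(M)\}$, $S_N=\{i:x_{p_i}\mid\mathrm{LM}(N)\}$. A violation of $(M,N)$ is a triple $(p_i,p_j,p_k)$ of distinct indices $i\in S_M$, $j\in S_N$, $k\in S_M\cap S_N$ with $r_i=r_j=r_k$, $\alpha_i\le\alpha_j<\alpha_k$, $\beta_j\le\beta_i<\beta_k$ and $(\alpha_i,\beta_i)\ne(\alpha_j,\beta_j)$. For a minor $P$ let $V_P$ be the set of variables dividing $\mathrm{LM}(P)$ and $d(P,Q)=|(V_P\setminus V_Q)\cup(V_Q\setminus V_P)|$. Let $D^L_u(A)=\{P\in D_u(A):\mathrm{LM}(P)\mid L\}$ and $D^L_v(B)=\{Q\in D_v(B):\mathrm{LM}(Q)\mid L\}$. $M$ and $N$ are $(A,B)$-adjacent if $M\ne N$, there is no $P\in D^L_u(A)$ with $d(P,N)<d(M,N)$, and there is no $Q\in D^L_v(B)$ with $d(M,Q)<d(M,N)$. *)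

From HB Require Import structures.
From mathcomp Require Import all_boot all_order all_algebra.
From mathcomp Require Import mpoly.
Import GRing.Theory.
Local Open Scope ring_scope.

(* A quiver with vertex set qV, arrows h_0,...,h_{nar-1} (arrow k goes from
   qsrc k to qtgt k) and dimension vector qm. Arrows are indexed from 0. *)
Record quiver := Quiver {
  qV : finType;
  nar : nat;
  qsrc : 'I_nar -> qV;
  qtgt : 'I_nar -> qV;
  qm : qV -> nat }.

Set Implicit Arguments. Unset Strict Implicit. Unset Printing Implicit Defensive.

Section QuiverDefs.
Variable Q : quiver.

(* a bound on all matrix sizes, used only to encode variable indices *)
Definition qmx : nat := \max_(k < nar Q) maxn (qm Q (qtgt Q k)) (qm Q (qsrc Q k)).

Definition valid_entry (k : 'I_(nar Q)) (i j : nat) : bool :=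
  (i < qm Q (qtgt Q k))%N && (j < qm Q (qsrc Q k))%N.

Definition Var : finType :=
  {x : 'I_(nar Q) * 'I_qmx.+1 * 'I_qmx.+1 | valid_entry x.1.1 x.1.2 x.2}.

Definition var_arrow (v : Var) : nat := (val v).1.1.
Definition var_row (v : Var) : nat := (val v).1.2.
Definition var_col (v : Var) : nat := (val v).2.

Definition var_of (k : 'I_(nar Q)) (i j : nat) : option Var :=
  insub (k, inord i, inord j).

Variable K : fieldType.

Notation nvar := #|Var|.
Definition polyR := {mpoly K[nvar]}.
Definition monoR := 'X_{1..nvar}.

(* the polynomial x^(k)_{ij} (0 for invalid triples, never used) *)
Definition X (k : 'I_(nar Q)) (i j : nat) : polyR :=
  if var_of k i j is Some v then 'X_(enum_rank v) else 0.

Definition expo (a : monoR) (v : Var) : nat := a (enum_rank v).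

(* ---- the monomial order ----
   The lexicographic order is determined by a total order on the variables,
   given by an injective weight w : x_v > x_v' iff w v > w v'. *)
Variable w : Var -> nat.

Definition lex_gt (a b : monoR) : bool :=
  [exists v : Var, (expo b v < expo a v)%N &&
     [forall v' : Var, (w v < w v')%N ==> (expo a v' == expo b v')]].

Definition LM (p : polyR) : monoR :=
  foldr (fun a b => if lex_gt a b then a else b) 0%MM (msupp p).

Definition wt (k : 'I_(nar Q)) (i j : nat) : nat :=
  if var_of k i j is Some v then w v else 0.

(* lexicographic order on pairs of naturals (used to order the columns of
   a horizontal concatenation / the rows of a vertical stacking) *)
Definition pair_lt (a b : nat * nat) : bool :=
  (a.1 < b.1)%N || ((a.1 == b.1) && (a.2 < b.2)%N).

(* The order is consistent with A_alpha = [X^(r_1)|...|X^(r_s)] (arrows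
   with target alpha): strictly decreasing along rows (left to right)
   and along columns (top to bottom).  Column of entry x^(k)_{ij} is (k,j). *)
Definition consistent_in (alpha : qV Q) : Prop :=
  (forall (k k' : 'I_(nar Q)) (i j j' : nat),
     qtgt Q k = alpha -> qtgt Q k' = alpha ->
     (i < qm Q alpha)%N -> (j < qm Q (qsrc Q k))%N -> (j' < qm Q (qsrc Q k'))%N ->
     pair_lt (k : nat, j) (k' : nat, j') -> (wt k' i j' < wt k i j)%N) /\
  (forall (k : 'I_(nar Q)) (i i' j : nat),
     qtgt Q k = alpha -> (i < i')%N -> (i' < qm Q alpha)%N ->
     (j < qm Q (qsrc Q k))%N -> (wt k i' j < wt k i j)%N).

(* The order is consistent with A_beta = vertical stacking of X^(r'_1),...
   (arrows with source beta).  Row of entry x^(k)_{ij} is (k,i). *)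
Definition consistent_out (beta : qV Q) : Prop :=
  (forall (k : 'I_(nar Q)) (i j j' : nat),
     qsrc Q k = beta -> (i < qm Q (qtgt Q k))%N -> (j < j')%N ->
     (j' < qm Q beta)%N -> (wt k i j' < wt k i j)%N) /\
  (forall (k k' : 'I_(nar Q)) (i i' j : nat),
     qsrc Q k = beta -> qsrc Q k' = beta ->
     (i < qm Q (qtgt Q k))%N -> (i' < qm Q (qtgt Q k'))%N -> (j < qm Q beta)%N ->
     pair_lt (k : nat, i) (k' : nat, i') -> (wt k' i' j < wt k i j)%N).

Definition consistent_order : Prop :=
  injective w /\ forall gamma, consistent_in gamma /\ consistent_out gamma.

(* ---- minors ----
   P is a u x u minor of A_alpha (alpha a sink): rows f 0 < ... < f (u-1),
   columns (ck b, cj b) strictly increasing in the column order. *)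
Definition sink_minor (alpha : qV Q) (u : nat) (P : polyR) : Prop :=
  exists (f : 'I_u -> 'I_(qm Q alpha)) (ck : 'I_u -> 'I_(nar Q)) (cj : 'I_u -> nat),
    [/\ (forall a a' : 'I_u, (a < a')%N -> (f a < f a')%N),
        (forall b, qtgt Q (ck b) = alpha /\ (cj b < qm Q (qsrc Q (ck b)))%N),
        (forall b b' : 'I_u, (b < b')%N -> pair_lt (ck b : nat, cj b) (ck b' : nat, cj b')) &
        P = \det (\matrix_(a < u, b < u) X (ck b) (f a) (cj b))].

(* P is a u x u minor of A_beta (beta a source): rows (rk a, ri a) strictly
   increasing in the row order, columns g 0 < ... < g (u-1). *)
Definition source_minor (beta : qV Q) (u : nat) (P : polyR) : Prop :=
  exists (rk : 'I_u -> 'I_(nar Q)) (ri : 'I_u -> nat) (g : 'I_u -> 'I_(qm Q beta)),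
    [/\ (forall a, qsrc Q (rk a) = beta /\ (ri a < qm Q (qtgt Q (rk a)))%N),
        (forall a a' : 'I_u, (a < a')%N -> pair_lt (rk a : nat, ri a) (rk a' : nat, ri a')),
        (forall b b' : 'I_u, (b < b')%N -> (g b < g b')%N) &
        P = \det (\matrix_(a < u, b < u) X (rk a) (ri a) (g b))].

Definition VLM (P : polyR) : {set Var} := [set v | (0 < expo (LM P) v)%N].

Definition dist (P R : polyR) : nat := #|(VLM P :\: VLM R) :|: (VLM R :\: VLM P)|.

Definition divides_lcm (P M N : polyR) : Prop :=
  forall v : Var, (expo (LM P) v <= maxn (expo (LM M) v) (expo (LM N) v))%N.

(* (A,B)-adjacency for the arrow k0 : A = A_{tgt k0}, B = A_{src k0} *)
Definition adjacent (k0 : 'I_(nar Q)) (u v : nat) (M N : polyR) : Prop :=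
  [/\ M <> N,
      ~ (exists P, [/\ sink_minor (qtgt Q k0) u P, divides_lcm P M N & (dist P N < dist M N)%N]) &
      ~ (exists R, [/\ source_minor (qsrc Q k0) v R, divides_lcm R M N & (dist M R < dist M N)%N])].

(* a violation of (M,N): variables x_{p_i}, x_{p_j}, x_{p_k} of L (distinct)
   with x_{p_i} | LM(M), x_{p_j} | LM(N), x_{p_k} | LM(M) and LM(N), same
   arrow, alpha_i <= alpha_j < alpha_k, beta_j <= beta_i < beta_k and
   (alpha_i,beta_i) <> (alpha_j,beta_j). *)
Definition violation (M N : polyR) : Prop :=
  exists pi pj pk : Var,
    [/\ [&& pi != pj, pi != pk & pj != pk],
        pi \in VLM M, pj \in VLM N, pk \in VLM M :&: VLM N &
        [/\ var_arrow pi = var_arrow pj, var_arrow pj = var_arrow pk,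
            (var_row pi <= var_row pj < var_row pk)%N,
            (var_col pj <= var_col pi < var_col pk)%N &
            (var_row pi, var_col pi) != (var_row pj, var_col pj)]].

End QuiverDefs.

From HB Require Import structures.
From mathcomp Require Import all_boot all_order all_algebra.
From mathcomp Require Import mpoly fingroup perm zify.
Set Implicit Arguments. Unset Strict Implicit. Unset Printing Implicit Defensive.
Import GRing.Theory.

(* In an order consistent with the matrices, the leading monomial of a minor
   is the product of its main diagonal.  Along the diagonal of M the rows of
   A increase, and so do its columns, ordered by (arrow, column); along the
   diagonal of N the roles of rows and columns are exchanged.  Take a
   violation (p_i, p_j, p_k) whose diagonal segments p_i .. p_k in M and
   p_j .. p_k in N are shortest.  They then lie in the arrow of p_k and meet
   only at p_k, and splicing the end of the longer segment in place of the
   shorter one (after extending both to the left while they keep crossing,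
   when their lengths agree) gives the diagonal of a minor P of A, or R of B,
   whose leading monomial divides L and which is strictly closer to N, resp.
   M.  This contradicts adjacency. *)

Lemma in_mkseqP (T : eqType) (p : nat -> T) n x :
  reflect (exists2 a, a < n & p a = x) (x \in mkseq p n).
Proof.
apply: (iffP mapP) => [[a] | [a an <-]]; last by exists a; rewrite // mem_iota.
by rewrite mem_iota => /andP [_ an] ->; exists a.
Qed.

Lemma sum_eq_mem (T : eqType) (p : nat -> T) n x :
  {in gtn n &, injective p} -> \sum_(a < n) (p a == x) = (x \in mkseq p n).
Proof.
move=> p_inj; case: in_mkseqP => [[a an <-] | none].
  rewrite (bigD1 (Ordinal an)) //= eqxx big1 ?addn0 // => i ne; apply/eqP; rewrite eqb0.
  by apply: contra ne => /eqP E; apply/eqP/val_inj/(p_inj _ _ (ltn_ord i) an E).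
by apply: big1 => i _; apply/eqP; rewrite eqb0; apply/eqP => E; apply: none; exists i.
Qed.

Lemma symdiff_card_lt (T : finType) (A B C : {set T}) :
  C \subset A :|: B -> A :&: B \subset C -> ~~ (A \subset C :|: B) ->
  #|(C :\: B) :|: (B :\: C)| < #|(A :\: B) :|: (B :\: A)|.
Proof.
move=> /subsetP CAB /subsetP ABC /subsetPn [x xA xCB]; apply: proper_card.
apply/properP; split.
  apply/subsetP => y; rewrite !inE => /orP [/andP [yB yC] | /andP [yC yB]].
    by have := CAB y yC; rewrite inE (negbTE yB) orbF => ->.
  by rewrite yB andbT /=; apply: contra yC => yA; apply: ABC; rewrite inE yA.
move: xCB; rewrite !inE negb_or => /andP [xC xB].
by exists x; rewrite !inE ?xA ?(negbTE xC) ?(negbTE xB).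
Qed.

Definition of_ord (T : Type) (d : T) n (F : 'I_n -> T) (a : nat) : T := oapp F d (insub a).

Lemma of_ordE (T : Type) (d : T) n (F : 'I_n -> T) (i : 'I_n) : of_ord d F i = F i.
Proof. by rewrite /of_ord valK. Qed.

Section Chains.
Variables (T : eqType) (arr : T -> nat).

Local Notation key_lt c x y := ((arr x < arr y) || (arr x == arr y) && (c x < c y)).

(* With [r, c] = row, column this is the main diagonal of a
   minor of a sink matrix [A_alpha], whose columns are ordered by (arrow,
   column); with [r, c] = column, row it is the diagonal of a minor of a
   source matrix [A_beta]. *)
Definition chain (r c : T -> nat) (n : nat) (p : nat -> T) : Prop :=
  forall a a', a < a' -> a' < n -> r (p a) < r (p a') /\ key_lt c (p a) (p a').

Lemma chain_le r c n p a a' : chain r c n p -> a <= a' -> a' < n ->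
  r (p a) <= r (p a') /\
    (arr (p a) < arr (p a')) || (arr (p a) == arr (p a')) && (c (p a) <= c (p a')).
Proof.
move=> Hp; rewrite leq_eqVlt => /orP [/eqP -> | lt] lt'; first by split; lia.
by have [] := Hp _ _ lt lt'; lia.
Qed.

Lemma chain_inj r c n p a a' : chain r c n p -> a < n -> a' < n -> p a = p a' -> a = a'.
Proof.
move=> Hp an a'n E; case: (ltngtP a a') => // lt.
- by have [] := Hp _ _ lt a'n; rewrite E ltnn.
- by have [] := Hp _ _ lt an; rewrite E ltnn.
Qed.

Lemma notin_chain_cross r c n p x b : chain c r n p -> b < n ->
  arr x = arr (p b) -> r x <= r (p b) -> c (p b) <= c x -> x != p b ->
  x \notin mkseq p n.
Proof.
move=> Hp bn Ax rx cx ne; apply/in_mkseqP => [[b' b'n E]].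
case: (ltngtP b' b) => lt.
- by have [] := Hp _ _ lt bn; rewrite E; lia.
- by have [] := Hp _ _ lt b'n; rewrite E; lia.
- by move: ne; rewrite -E lt eqxx.
Qed.

Lemma chain_segment_lt r c n p t b b' e : chain r c n p ->
  t <= b -> b < b' -> b' <= e -> e < n -> arr (p t) = arr (p e) ->
  [/\ arr (p b) = arr (p e), arr (p b') = arr (p e), r (p b) < r (p b') & c (p b) < c (p b')].
Proof.
move=> Hp tb bb' b'e en At.
have [_ h1] := chain_le Hp tb (ltn_trans bb' (leq_ltn_trans b'e en)).
have [_ h2] := chain_le Hp (ltnW bb') (leq_ltn_trans b'e en).
have [_ h3] := chain_le Hp b'e en.
have [h4 h5] := Hp _ _ bb' (leq_ltn_trans b'e en).
split; lia.
Qed.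

(* A chain [pv] whose variables divide lcm(mv, nv), which keeps the common
   variables and drops one of [mv] missing from [nv]: it is strictly closer
   to [nv] than [mv] is.  Its arrows are arrows of [mv], so it is again the
   diagonal of a minor of the same matrix. *)
Definition closer_chain (r c : T -> nat) (u v : nat) (mv nv : nat -> T) : Prop :=
  exists pv, [/\ chain r c u pv,
    forall a, a < u -> exists2 a', a' < u & arr (pv a) = arr (mv a'),
    {subset mkseq pv u <= mkseq mv u ++ mkseq nv v},
    {subset [predI mkseq mv u & mkseq nv v] <= mkseq pv u} &
    exists2 x, x \in mkseq mv u & x \notin mkseq pv u ++ mkseq nv v].

Definition splice (mv nv : nat -> T) s ak t (a : nat) : T :=
  if s <= a < ak then nv (a - s + t) else mv a.

Lemma splice_chain r c u v mv nv s ak t bk :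
  chain r c u mv -> chain c r v nv ->
  s < ak -> ak < u -> bk < v -> ak - s = bk - t -> mv ak = nv bk ->
  arr (nv t) = arr (nv bk) -> r (mv s) <= r (nv t) ->
  (0 < s -> key_lt c (mv s.-1) (nv t)) ->
  chain r c u (splice mv nv s ak t).
Proof.
move=> HM HN sak aku bkv len Ek At row0 key0 a a' aa' a'u; rewrite /splice.
case: ifP => Ha; case: ifP => Ha'.
- have := chain_segment_lt HN (ltac:(lia) : t <= a - s + t)
    (ltac:(lia) : a - s + t < a' - s + t) (ltac:(lia) : a' - s + t <= bk) bkv At.
  by case; lia.
- have [h1 h2 h3 h4] := chain_segment_lt HN (ltac:(lia) : t <= a - s + t)
    (ltac:(lia) : a - s + t < bk) (leqnn _) bkv At.
  have [h5 h6] := chain_le HM (ltac:(lia) : ak <= a') a'u.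
  by move: h5 h6; rewrite Ek; lia.
- have [h1 h2] := chain_le HM (ltac:(lia) : a <= s.-1) (ltac:(lia) : s.-1 < u).
  have [h3 _] := HM s.-1 s ltac:(lia) ltac:(lia).
  have h4 := key0 ltac:(lia).
  have [h5 h6 h7 h8] : [/\ arr (nv t) = arr (nv bk), arr (nv (a' - s + t)) = arr (nv bk),
      r (nv t) <= r (nv (a' - s + t)) & c (nv t) <= c (nv (a' - s + t))].
    case: (ltngtP t (a' - s + t)) => [lt | | <-]; [ | lia | by []].
    have := chain_segment_lt HN (leqnn t) lt (ltac:(lia) : a' - s + t <= bk) bkv At.
    by case; split; lia.
  split; lia.
- exact: HM _ _ aa' a'u.
Qed.

Lemma splice_closer r c u v mv nv s ak t bk :
  chain r c u mv -> chain c r v nv ->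
  s < ak -> ak < u -> t < bk -> bk < v -> ak - s = bk - t -> mv ak = nv bk ->
  arr (nv t) = arr (nv bk) ->
  (forall a, s <= a < ak -> mv a \notin mkseq nv v) ->
  (forall b, t <= b < bk -> nv b \notin mkseq mv u) ->
  r (mv s) <= r (nv t) ->
  (0 < s -> key_lt c (mv s.-1) (nv t)) ->
  closer_chain r c u v mv nv.
Proof.
move=> HM HN sak aku tbk bkv len Ek At outM outN row0 key0.
exists (splice mv nv s ak t); split.
- exact: splice_chain HM HN sak aku bkv len Ek At row0 key0.
- move=> a au; rewrite /splice; case: ifP => Ha; last by exists a.
  have [h1 _ _ _] := chain_segment_lt HN (ltac:(lia) : t <= a - s + t)
    (ltac:(lia) : a - s + t < bk) (leqnn _) bkv At.
  by exists ak; rewrite // Ek.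
- move=> _ /in_mkseqP [a au <-]; rewrite mem_cat /splice; case: ifP => Ha.
  + by apply/orP; right; apply/in_mkseqP; exists (a - s + t); first lia.
  + by apply/orP; left; apply/in_mkseqP; exists a.
- move=> _ /andP [/in_mkseqP [a au <-] inN]; apply/in_mkseqP; exists a => //.
  rewrite /splice; case: ifP => // Ha.
  by move: (outM a Ha); rewrite inN.
- exists (mv s); first by apply/in_mkseqP; exists s => //; lia.
  rewrite mem_cat negb_or outM ?leqnn ?sak // andbT.
  apply/in_mkseqP => [[a au]]; rewrite /splice; case: ifP => Ha E.
  + move: (outN (a - s + t) ltac:(lia)); rewrite E; case/negP.
    by apply/in_mkseqP; exists s => //; lia.
  + by have := chain_inj HM au (ltn_trans sak aku) E; lia.
Qed.

(* The paper's violation (p_i, p_j, p_k), with p_i = mv ai, p_j = nv bj and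
   p_k = mv ak = nv bk. *)
Definition violation_at r c u v (mv nv : nat -> T) ai bj ak bk : Prop :=
  [/\ ai < u, bj < v, ak < u, bk < v & mv ak = nv bk] /\
  [/\ arr (mv ai) = arr (mv ak), arr (nv bj) = arr (mv ak),
      r (mv ai) <= r (nv bj) < r (mv ak), c (nv bj) <= c (mv ai) < c (mv ak) &
      mv ai != nv bj].

Lemma violation_at_sym r c u v mv nv ai bj ak bk :
  violation_at r c u v mv nv ai bj ak bk -> violation_at c r v u nv mv bj ai bk ak.
Proof.
case=> [[aiu bjv aku bkv Ek] [Ai Aj R C ne]].
by split; split; rewrite // -?Ek // eq_sym.
Qed.

Lemma violation_shrink r c u v mv nv ai bj ak bk a :
  chain r c u mv -> chain c r v nv -> violation_at r c u v mv nv ai bj ak bk ->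
  ai < a < ak -> ~~ ((r (nv bj) < r (mv a)) && (mv a \notin mkseq nv v)) ->
  exists ai' bj' ak' bk', violation_at r c u v mv nv ai' bj' ak' bk' /\
    ak' - ai' + (bk' - bj') < ak - ai + (bk - bj).
Proof.
move=> HM HN [[aiu bjv aku bkv Ek] [Ai Aj R C ne]] /andP [aia aak].
have au : a < u by lia.
have [r1 k1] := HM _ _ aia au.
have [r2 k2] := HM _ _ aak aku.
rewrite negb_and negbK.
case: (leqP (r (mv a)) (r (nv bj))) => [rle _ | rlt /= /in_mkseqP [b bv Eb]].
  exists a, bj, ak, bk; split; last by lia.
  split; split; rewrite //; try lia.
  by apply/eqP => E; move: k1; rewrite E; lia.
exists ai, bj, a, b; split.
  by split; split; rewrite ?Eb //; lia.
case: (leqP bk b) => bkb; last by lia.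
have [rb kb] := chain_le HN bkb bv.
by move: rb kb; rewrite Eb -Ek; lia.
Qed.

Definition tight_at r c u v (mv nv : nat -> T) ai bj ak bk : Prop :=
  (forall a, ai < a < ak -> r (nv bj) < r (mv a) /\ mv a \notin mkseq nv v) /\
  (forall b, bj < b < bk -> c (mv ai) < c (nv b) /\ nv b \notin mkseq mv u).

(* A violation minimizing [(ak - ai) + (bk - bj)] is tight. *)
Lemma exists_tight_violation r c u v mv nv ai bj ak bk :
  chain r c u mv -> chain c r v nv -> violation_at r c u v mv nv ai bj ak bk ->
  exists ai bj ak bk, violation_at r c u v mv nv ai bj ak bk /\
    tight_at r c u v mv nv ai bj ak bk.
Proof.
move=> HM HN; move: {2}(ak - ai + (bk - bj)).+1 (ltnSn (ak - ai + (bk - bj))) => n.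
elim: n ai bj ak bk => // n IH ai bj ak bk lt_n V.
have shrunk (ai' bj' ak' bk' : nat) : violation_at r c u v mv nv ai' bj' ak' bk' /\
    ak' - ai' + (bk' - bj') < ak - ai + (bk - bj) ->
    exists ai bj ak bk,
      violation_at r c u v mv nv ai bj ak bk /\ tight_at r c u v mv nv ai bj ak bk.
  by case=> V' lt'; apply: IH V'; lia.
case: (boolP [exists a : 'I_ak,
    (ai < a) && ~~ ((r (nv bj) < r (mv a)) && (mv a \notin mkseq nv v))]).
  case/existsP => a /andP [aia bad].
  have aiak : ai < a < ak by rewrite aia ltn_ord.
  have [ai' [bj' [ak' [bk' H]]]] := violation_shrink HM HN V aiak bad.
  exact: shrunk H.
move/existsPn => tightM.
case: (boolP [exists b : 'I_bk,
    (bj < b) && ~~ ((c (mv ai) < c (nv b)) && (nv b \notin mkseq mv u))]).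
  case/existsP => b /andP [bjb bad].
  have bjbk : bj < b < bk by rewrite bjb ltn_ord.
  have [bj' [ai' [bk' [ak' [V' lt']]]]] :=
    violation_shrink HN HM (violation_at_sym V) bjbk bad.
  by apply: (shrunk ai' bj' ak' bk'); split; [apply: violation_at_sym | lia].
move/existsPn => tightN.
exists ai, bj, ak, bk; split=> //; split.
- move=> a /andP [aia aak]; have := tightM (Ordinal aak); rewrite /= aia /= negbK.
  by case/andP => ??.
- move=> b /andP [bjb bbk]; have := tightN (Ordinal bbk); rewrite /= bjb /= negbK.
  by case/andP => ??.
Qed.

Lemma tight_segment_notin r c u v mv nv ai bj ak bk :
  chain c r v nv -> violation_at r c u v mv nv ai bj ak bk ->
  tight_at r c u v mv nv ai bj ak bk ->
  forall a, ai <= a < ak -> mv a \notin mkseq nv v.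
Proof.
move=> HN [[_ bjv _ _ _] [Ai Aj R C ne]] [tM _] a /andP [aia aak].
case: (ltngtP ai a) => [lt | | <-]; [by have [] := tM a (introT andP (conj lt aak)) | lia |].
by apply: (notin_chain_cross HN bjv); rewrite ?Ai ?Aj //; lia.
Qed.

Lemma shorter_segment_closer r c u v mv nv ai bj ak bk :
  chain r c u mv -> chain c r v nv -> violation_at r c u v mv nv ai bj ak bk ->
  tight_at r c u v mv nv ai bj ak bk -> ak - ai < bk - bj ->
  closer_chain r c u v mv nv.
Proof.
move=> HM HN V T' lt; have [[aiu bjv aku bkv Ek] [Ai Aj R C ne]] := V.
have aik : ai < ak.
  by case: (leqP ak ai) => // le; have [] := chain_le HM le aiu; lia.
set t := bk - (ak - ai).
have [bjt tbk] : bj < t /\ t < bk by rewrite /t; lia.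
have [ct _] := T'.2 t (introT andP (conj bjt tbk)).
have [_ k1] := chain_le HN (ltnW tbk) bkv.
have [r2 k2] := HN _ _ bjt (ltn_trans tbk bkv).
move: k1 k2; rewrite -Ek => k1 k2.
have At : arr (nv t) = arr (nv bk) by rewrite -Ek; lia.
apply: (splice_closer HM HN aik aku tbk bkv _ Ek At).
- rewrite /t; lia.
- exact: tight_segment_notin HN V T'.
- move=> b /andP [tb bbk]; have [] := T'.2 b; [apply/andP; split | ]; lia.
- lia.
- move=> ai0; have [_ k0] := HM ai.-1 ai ltac:(lia) aiu.
  by move: k0; rewrite At -Ek; lia.
Qed.

(* If neither segment can be spliced into the other chain, the entries just
   before the two segments cross again: both segments extend one step to
   the left. *)
Lemma equal_segment_closer r c u v mv nv s t ak bk :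
  chain r c u mv -> chain c r v nv ->
  s < ak -> ak < u -> t < bk -> bk < v -> ak - s = bk - t -> mv ak = nv bk ->
  arr (mv s) = arr (mv ak) -> arr (nv t) = arr (mv ak) ->
  (forall a, s <= a < ak -> mv a \notin mkseq nv v) ->
  (forall b, t <= b < bk -> nv b \notin mkseq mv u) ->
  r (mv s) <= r (nv t) -> c (nv t) <= c (mv s) ->
  closer_chain r c u v mv nv \/ closer_chain c r v u nv mv.
Proof.
move=> HM HN; elim: s t => [|s IH] t sak aku tbk bkv len Ek As At outM outN rs ct.
  left; apply: (splice_closer HM HN sak aku tbk bkv len Ek _ outM outN rs) => //.
  by rewrite At Ek.
case: (boolP (key_lt c (mv s) (nv t))).
  move=> keyM; left; apply: (splice_closer HM HN sak aku tbk bkv len Ek _ outM outN rs) => //.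
  by rewrite At Ek.
case: t tbk len At outN rs ct => [|t] tbk len At outN rs ct keyM.
  by right; apply: (splice_closer HN HM tbk bkv sak aku (esym len) (esym Ek) _ outN outM ct).
case: (boolP (key_lt r (nv t) (mv s.+1))).
  move=> keyN; right.
  exact: (splice_closer HN HM tbk bkv sak aku (esym len) (esym Ek) _ outN outM ct).
move=> keyN.
have [rM kM] := HM s s.+1 (ltnSn s) ltac:(lia).
have [cN kN] := HN t t.+1 (ltnSn t) ltac:(lia).
have As' : arr (mv s) = arr (mv ak) by lia.
have At' : arr (nv t) = arr (mv ak) by lia.
have outM' a : s <= a < ak -> mv a \notin mkseq nv v.
  case/andP; rewrite leq_eqVlt => /orP [/eqP <- _ | sa aak]; last by apply: outM; lia.
  apply: (notin_chain_cross HN (ltac:(lia) : t < v)); rewrite ?As' ?At' //; try lia.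
  by apply/eqP => E; move: rM rs; rewrite E; lia.
have outN' b : t <= b < bk -> nv b \notin mkseq mv u.
  case/andP; rewrite leq_eqVlt => /orP [/eqP <- _ | tb bbk]; last by apply: outN; lia.
  apply: (notin_chain_cross HM (ltac:(lia) : s < u)); rewrite ?As' ?At' //; try lia.
  by apply/eqP => E; move: rM rs; rewrite -E; lia.
apply: (IH t); rewrite ?As' ?At' //; lia.
Qed.

Theorem violation_closer_chain r c u v mv nv ai bj ak bk :
  chain r c u mv -> chain c r v nv -> violation_at r c u v mv nv ai bj ak bk ->
  closer_chain r c u v mv nv \/ closer_chain c r v u nv mv.
Proof.
move=> HM HN /(exists_tight_violation HM HN) [{}ai [{}bj [{}ak [{}bk [V T']]]]].
have V' := violation_at_sym V.
have T'' : tight_at c r v u nv mv bj ai bk ak by case: T' => ??; split.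
case: (ltngtP (ak - ai) (bk - bj)) => len.
- by left; apply: shorter_segment_closer V T' len.
- by right; apply: shorter_segment_closer V' T'' len.
- have [[aiu bjv aku bkv Ek] [Ai Aj R C _]] := V.
  have aik : ai < ak.
    by case: (leqP ak ai) => // le; have [] := chain_le HM le aiu; lia.
  apply: (equal_segment_closer HM HN aik aku _ bkv len Ek Ai Aj); try lia.
  - exact: tight_segment_notin HN V T'.
  - exact: tight_segment_notin HM V' T''.
Qed.

End Chains.

Section LexOrder.
Variables (Q : quiver) (w : Var Q -> nat).
Hypothesis w_inj : injective w.
Local Notation mono := (monoR Q).

Lemma lex_gt_irr (a : mono) : lex_gt w a a = false.
Proof. by apply/existsP => [[v /andP [h _]]]; rewrite ltnn in h. Qed.

Lemma lex_gt_asym (a b : mono) : lex_gt w a b -> lex_gt w b a = false.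
Proof.
case/existsP => v /andP [h1 /forallP h2]; apply/existsP => [[v' /andP [h1' /forallP h2']]].
case: (ltngtP (w v) (w v')) => h.
- by move/eqP: (implyP (h2 v') h); lia.
- by move/eqP: (implyP (h2' v) h); lia.
- by move: h1'; rewrite -(w_inj h); lia.
Qed.

Lemma lex_gt_total (a b : mono) : a != b -> lex_gt w a b || lex_gt w b a.
Proof.
move=> ne; have /existsP [v0 Hv0] : [exists v, expo a v != expo b v].
  apply: contraNT ne => /existsPn same; apply/eqP/mnmP => i.
  by rewrite -(enum_valK i); apply/eqP/negPn/same.
case: (@arg_maxnP _ v0 (fun v => expo a v != expo b v) w Hv0) => v Hv Hmax.
have agree v' : w v < w v' -> expo a v' == expo b v'.
  by move=> lt; apply: contraTT lt => ne'; rewrite -leqNgt; apply: Hmax.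
case: (ltngtP (expo a v) (expo b v)) => h.
- apply/orP; right; apply/existsP; exists v; rewrite h /=.
  by apply/forallP => v'; apply/implyP => /agree; rewrite eq_sym.
- apply/orP; left; apply/existsP; exists v; rewrite h /=.
  by apply/forallP => v'; apply/implyP/agree.
- by rewrite h eqxx in Hv.
Qed.

Lemma lex_gt_0 (m : mono) : m != 0%MM -> lex_gt w m 0%MM.
Proof.
move/lex_gt_total; case/orP => // /existsP [v /andP [h _]].
by move: h; rewrite /expo mnm0E.
Qed.

Local Notation lexmax := (fun a b : mono => if lex_gt w a b then a else b).

Lemma foldr_lexmax_mem (s : seq mono) : foldr lexmax 0%MM s \in 0%MM :: s.
Proof.
elim: s => [|x s IH] /=; first by rewrite inE.
case: ifP => _; first by rewrite !inE eqxx orbT.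
by move: IH; rewrite !inE => /orP [->|->]; rewrite ?orbT.
Qed.

Lemma foldr_lexmax_eq (s : seq mono) m : m \in s ->
  (forall m', m' \in s -> m' != m -> lex_gt w m m') -> foldr lexmax 0%MM s = m.
Proof.
elim: s => [//|x s IH] Hm Hdom /=.
case: (boolP (m \in s)) => ms.
  rewrite IH //; last by move=> m' m's; apply: Hdom; rewrite inE m's orbT.
  case: ifP => // gt; case: (eqVneq x m) => // xm.
  by rewrite lex_gt_asym in gt => //; apply: Hdom; rewrite ?inE ?eqxx.
have xm : x = m by move: Hm; rewrite inE (negbTE ms) orbF => /eqP.
subst m.
set r := foldr _ _ _; case: (eqVneq r x) => [->|rx]; first by case: ifP.
rewrite ifT //; move: (foldr_lexmax_mem s); rewrite -/r inE => /orP [/eqP r0 | rs].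
  by rewrite r0 lex_gt_0 // -r0 eq_sym.
by apply: Hdom; rewrite ?inE ?rs ?orbT.
Qed.

Lemma LM_eq (K : fieldType) (p : polyR Q K) m : m \in msupp p ->
  (forall m', m' \in msupp p -> m' != m -> lex_gt w m m') -> LM w p = m.
Proof. exact: foldr_lexmax_eq. Qed.

End LexOrder.

Section DiagonalLeadingMonomial.
Variables (Q : quiver) (K : fieldType) (w : Var Q -> nat).
Hypothesis w_inj : injective w.
Variables (n : nat) (E : 'I_n -> 'I_n -> Var Q).
Hypothesis w_E_col : forall a a' b : 'I_n, a < a' -> w (E a' b) < w (E a b).
Hypothesis w_E_row : forall a b b' : 'I_n, b < b' -> w (E a b') < w (E a b).

Definition perm_mono (s : 'S_n) : monoR Q :=
  \big[mnm_add/0%MM]_(a < n) U_(enum_rank (E a (s a)))%MM.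

Lemma expo_perm_mono s v : expo (perm_mono s) v = \sum_(a < n) (E a (s a) == v).
Proof.
rewrite /expo /perm_mono mnm_sumE; apply: eq_bigr => a _.
by rewrite mnm1E (inj_eq enum_rank_inj).
Qed.

Lemma w_E_le (a a' b b' : 'I_n) : a <= a' -> b <= b' -> w (E a' b') <= w (E a b).
Proof.
rewrite leq_eqVlt => /orP [/eqP/val_inj -> | aa'];
  rewrite leq_eqVlt => /orP [/eqP/val_inj -> | bb'] //.
- exact/ltnW/w_E_row.
- exact/ltnW/w_E_col.
- exact/ltnW/(ltn_trans (w_E_row _ bb') (w_E_col _ aa')).
Qed.

Lemma w_E_lt (a a' b b' : 'I_n) : a <= a' -> b <= b' -> (a < a') || (b < b') ->
  w (E a' b') < w (E a b).
Proof.
move=> aa' bb' /orP [lt | lt].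
- exact: leq_trans (w_E_col _ lt) (w_E_le (leqnn a) bb').
- exact: leq_trans (w_E_row _ lt) (w_E_le aa' (leqnn b)).
Qed.

(* The first point [a0] moved by [s] is the witness: [E a0 a0] is the
   heaviest variable whose exponents differ. *)
Lemma perm_mono_lex_gt s : s != 1%g -> lex_gt w (perm_mono 1) (perm_mono s).
Proof.
move=> ns; have /existsP [a1 Ha1] : [exists a, s a != a].
  apply: contraNT ns => /existsPn fixed; apply/eqP/permP => a.
  by rewrite perm1; apply/eqP/negPn/fixed.
case: (@arg_minnP _ a1 (fun a => s a != a) val Ha1) => a0 Ha0 Hmin.
have fix0 (a : 'I_n) : a < a0 -> s a = a.
  by move=> lt; apply/eqP; apply: contraTT lt => /Hmin; rewrite -leqNgt.
have ge0 (a : 'I_n) : a0 <= a -> a0 <= s a.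
  move=> le; rewrite leqNgt; apply/negP => lt.
  by have := fix0 _ lt; move/perm_inj => E'; rewrite E' ltnNge le in lt.
apply/existsP; exists (E a0 a0); apply/andP; split.
  have -> : expo (perm_mono s) (E a0 a0) = 0.
    rewrite expo_perm_mono; apply: big1 => a _; apply/eqP; rewrite eqb0; apply/eqP => Ea.
    case: (ltnP a a0) => h.
      by move: (w_E_lt (ltnW h) (ltnW h)); rewrite h -Ea fix0 // ltnn => /(_ isT).
    have lt : (a0 < a) || (a0 < s a).
      rewrite !ltn_neqAle h ge0 // !andbT -negb_and.
      apply: contra Ha0 => /andP [/eqP e1 /eqP e2].
      by move/val_inj: e1 => e1; subst a; apply/eqP/val_inj.
    by move: (w_E_lt h (ge0 _ h) lt); rewrite -Ea ltnn.
  by rewrite expo_perm_mono (bigD1 a0) // perm1 eqxx.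
apply/forallP => v; apply/implyP => lt; rewrite !expo_perm_mono; apply/eqP.
apply: eq_bigr => a _; rewrite perm1; case: (ltnP a a0) => h; first by rewrite fix0.
have light (b : 'I_n) : a0 <= b -> (E a b == v) = false.
  by move=> hb; apply/eqP => Ev; move: (w_E_le h hb); rewrite Ev; lia.
by rewrite !light ?ge0.
Qed.

Let D : polyR Q K := (\det (\matrix_(a, b) 'X_(enum_rank (E a b))))%R.

Lemma mcoeff_det_X m :
  (D@_m = \sum_(s : 'S_n) (-1) ^+ s * ((perm_mono s == m)%:R : K))%R.
Proof.
have -> : (D = \sum_(s : 'S_n) (-1) ^+ s * 'X_[perm_mono s])%R.
  rewrite /D /determinant; apply: eq_bigr => s _; congr (_ * _)%R.
  rewrite /perm_mono (big_morph (@mpolyX _ K) (@mpolyXD _ K) (@mpolyX0 _ K)).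
  by apply: eq_bigr => a _; rewrite mxE.
rewrite raddf_sum; apply: eq_bigr => s _.
by rewrite !mulr_sign; case: ifP => _; rewrite ?raddfN /= mcoeffX.
Qed.

Lemma expo_LM_det_X v : expo (LM w D) v = \sum_(a < n) (E a a == v).
Proof.
have neq1 s : s != 1%g -> perm_mono s != perm_mono 1.
  by move/perm_mono_lex_gt => gt; apply: contraTneq gt => ->; rewrite lex_gt_irr.
rewrite (@LM_eq _ w w_inj _ _ (perm_mono 1)).
- by rewrite expo_perm_mono; apply: eq_bigr => a _; rewrite perm1.
- rewrite mcoeff_msupp mcoeff_det_X (bigD1 1%g) //= big1 ?addr0.
    by rewrite odd_perm1 eqxx mulr1 expr0 oner_neq0.
  by move=> s /neq1 /negbTE ->; rewrite mulr0.
move=> m; rewrite mcoeff_msupp mcoeff_det_X => nz ne.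
have /existsP [s /eqP Es] : [exists s : 'S_n, perm_mono s == m].
  apply: contraNT nz => /existsPn none; apply/eqP/big1 => s _.
  by rewrite (negbTE (none s)) mulr0.
rewrite -Es; apply: perm_mono_lex_gt; apply: contraNneq ne => s1.
by rewrite -Es s1.
Qed.

End DiagonalLeadingMonomial.

Section Minors.
Variables (Q : quiver) (K : fieldType) (w : Var Q -> nat) (x0 : Var Q).
Hypothesis Hw : consistent_order w.

Definition varr (x : Var Q) : 'I_(nar Q) := (val x).1.1.

(* [x0] is a junk default, only reached on invalid triples. *)
Definition var_at k i j : Var Q := odflt x0 (var_of k i j).

Lemma var_atP k i j : valid_entry k i j ->
  [/\ var_of k i j = Some (var_at k i j), varr (var_at k i j) = k,
      var_row (var_at k i j) = i & var_col (var_at k i j) = j].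
Proof.
move=> ok; have /andP [ik jk] := ok.
have bnd : maxn (qm Q (qtgt Q k)) (qm Q (qsrc Q k)) <= qmx Q by apply: (leq_bigmax k).
have [bi bj] : i < (qmx Q).+1 /\ j < (qmx Q).+1 by lia.
rewrite /var_at /var_of; case: insubP => [x _ Ex | /negP []]; last by rewrite /= !inordK.
by rewrite /varr /var_row /var_col Ex /= !inordK.
Qed.

Lemma var_arrowE (x : Var Q) : var_arrow x = varr x.
Proof. by []. Qed.

Lemma var_at_coords (x : Var Q) : var_at (varr x) (var_row x) (var_col x) = x.
Proof.
rewrite /var_at /var_of /var_row /var_col !inord_val.
have -> : ((val x).1.1, (val x).1.2, (val x).2) = val x by case: (val x) => [[]].
by rewrite valK.
Qed.

Lemma valid_var (x : Var Q) : valid_entry (varr x) (var_row x) (var_col x).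
Proof. exact: valP x. Qed.

Lemma X_var_at k i j : valid_entry k i j -> X K k i j = 'X_(enum_rank (var_at k i j)).
Proof. by case/var_atP => E _ _ _; rewrite /X E. Qed.

Lemma wt_var_at k i j : valid_entry k i j -> wt w k i j = w (var_at k i j).
Proof. by case/var_atP => E _ _ _; rewrite /wt E. Qed.

Local Notation sink_chain := (chain (@var_arrow Q) (@var_row Q) (@var_col Q)).
Local Notation source_chain := (chain (@var_arrow Q) (@var_col Q) (@var_row Q)).

Definition sink_mx u (mv : nat -> Var Q) : 'M[polyR Q K]_u :=
  \matrix_(a < u, b < u) X K (varr (mv b)) (var_row (mv a)) (var_col (mv b)).

Definition source_mx v (nv : nat -> Var Q) : 'M[polyR Q K]_v :=
  \matrix_(a < v, b < v) X K (varr (nv a)) (var_row (nv a)) (var_col (nv b)).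

Lemma sink_minorP al u P : sink_minor al u P <->
  exists mv, [/\ sink_chain u mv, forall a, a < u -> qtgt Q (varr (mv a)) = al &
                 P = (\det (sink_mx u mv))%R].
Proof.
split.
  case=> f [ck [cj [f_lt ck_ok ck_lt ->]]].
  have ok (i : 'I_u) : valid_entry (ck i) (f i) (cj i).
    by have [t c] := ck_ok i; rewrite /valid_entry t ltn_ord c.
  pose mv := of_ord x0 (fun i => var_at (ck i) (f i) (cj i)).
  have mvE (i : 'I_u) : [/\ varr (mv i) = ck i, var_row (mv i) = f i & var_col (mv i) = cj i].
    by rewrite /mv of_ordE; case: (var_atP (ok i)).
  exists mv; split.
  - move=> a a' aa' a'u; have au := ltn_trans aa' a'u.
    have [k1 r1 c1] := mvE (Ordinal au); have [k2 r2 c2] := mvE (Ordinal a'u).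
    rewrite !var_arrowE k1 k2 r1 r2 c1 c2.
    by split; [exact: f_lt | exact: ck_lt].
  - by move=> a au; have [-> _ _] := mvE (Ordinal au); case: (ck_ok (Ordinal au)).
  - congr (\det _)%R; apply/matrixP => a b; rewrite !mxE.
    by have [-> _ ->] := mvE b; have [_ -> _] := mvE a.
case=> mv [mv_chain mv_tgt ->].
have row_lt (a : 'I_u) : var_row (mv a) < qm Q al.
  by have /andP [] := valid_var (mv a); rewrite mv_tgt.
exists (fun a => Ordinal (row_lt a)), (fun b => varr (mv b)), (fun b => var_col (mv b)).
split=> //.
- by move=> a a' aa'; have [] := mv_chain _ _ aa' (ltn_ord a').
- by move=> b; split; [exact: mv_tgt | by case/andP: (valid_var (mv b))].
- by move=> b b' bb'; have [] := mv_chain _ _ bb' (ltn_ord b').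
Qed.

Lemma source_minorP be v R : source_minor be v R <->
  exists nv, [/\ source_chain v nv, forall a, a < v -> qsrc Q (varr (nv a)) = be &
                 R = (\det (source_mx v nv))%R].
Proof.
split.
  case=> rk [ri [g [rk_ok rk_lt g_lt ->]]].
  have ok (i : 'I_v) : valid_entry (rk i) (ri i) (g i).
    by have [s r] := rk_ok i; rewrite /valid_entry s ltn_ord r.
  pose nv := of_ord x0 (fun i => var_at (rk i) (ri i) (g i)).
  have nvE (i : 'I_v) : [/\ varr (nv i) = rk i, var_row (nv i) = ri i & var_col (nv i) = g i].
    by rewrite /nv of_ordE; case: (var_atP (ok i)).
  exists nv; split.
  - move=> a a' aa' a'v; have av := ltn_trans aa' a'v.
    have [k1 r1 c1] := nvE (Ordinal av); have [k2 r2 c2] := nvE (Ordinal a'v).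
    rewrite !var_arrowE k1 k2 r1 r2 c1 c2.
    by split; [exact: g_lt | exact: rk_lt].
  - by move=> a av; have [-> _ _] := nvE (Ordinal av); case: (rk_ok (Ordinal av)).
  - congr (\det _)%R; apply/matrixP => a b; rewrite !mxE.
    by have [-> -> _] := nvE a; have [_ _ ->] := nvE b.
case=> nv [nv_chain nv_src ->].
have col_lt (b : 'I_v) : var_col (nv b) < qm Q be.
  by have /andP [] := valid_var (nv b); rewrite nv_src.
exists (fun a => varr (nv a)), (fun a => var_row (nv a)), (fun b => Ordinal (col_lt b)).
split=> //.
- by move=> a; split; [exact: nv_src | by case/andP: (valid_var (nv a))].
- by move=> a a' aa'; have [] := nv_chain _ _ aa' (ltn_ord a').
- by move=> b b' bb'; have [] := nv_chain _ _ bb' (ltn_ord b').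
Qed.

Let w_inj : injective w := Hw.1.

Lemma expo_LM_sink_det al u mv :
  sink_chain u mv -> (forall a, a < u -> qtgt Q (varr (mv a)) = al) ->
  forall x, expo (LM w (\det (sink_mx u mv))%R) x = (x \in mkseq mv u).
Proof.
move=> mv_chain mv_tgt x.
have [cons_rows cons_cols] := (Hw.2 al).1.
have ok (a b : 'I_u) : valid_entry (varr (mv b)) (var_row (mv a)) (var_col (mv b)).
  have /andP [ra _] := valid_var (mv a); have /andP [_ cb] := valid_var (mv b).
  by rewrite /valid_entry mv_tgt // -(mv_tgt a) // ra cb.
pose E (a b : 'I_u) := var_at (varr (mv b)) (var_row (mv a)) (var_col (mv b)).
have -> : sink_mx u mv = (\matrix_(a, b) 'X_(enum_rank (E a b)))%R.
  by apply/matrixP => a b; rewrite !mxE X_var_at.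
rewrite (@expo_LM_det_X _ K w w_inj u E).
- rewrite -(sum_eq_mem _ (fun a a' au a'u => chain_inj mv_chain au a'u)).
  by apply: eq_bigr => a _; rewrite /E var_at_coords.
- move=> a a' b aa'; rewrite /E -!wt_var_at //; apply: cons_cols => //.
  + by rewrite mv_tgt.
  + by have [] := mv_chain _ _ aa' (ltn_ord a').
  + by have /andP [] := valid_var (mv a'); rewrite mv_tgt.
  + by case/andP: (valid_var (mv b)).
- move=> a b b' bb'; rewrite /E -!wt_var_at //; apply: cons_rows => //.
  + exact: mv_tgt.
  + exact: mv_tgt.
  + by have /andP [] := valid_var (mv a); rewrite mv_tgt.
  + by case/andP: (valid_var (mv b)).
  + by case/andP: (valid_var (mv b')).
  + by have [] := mv_chain _ _ bb' (ltn_ord b').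
Qed.

Lemma expo_LM_source_det be v nv :
  source_chain v nv -> (forall a, a < v -> qsrc Q (varr (nv a)) = be) ->
  forall x, expo (LM w (\det (source_mx v nv))%R) x = (x \in mkseq nv v).
Proof.
move=> nv_chain nv_src x.
have [cons_cols cons_rows] := (Hw.2 be).2.
have ok (a b : 'I_v) : valid_entry (varr (nv a)) (var_row (nv a)) (var_col (nv b)).
  have /andP [ra _] := valid_var (nv a); have /andP [_ cb] := valid_var (nv b).
  by rewrite /valid_entry nv_src // -(nv_src b) // ra cb.
pose E (a b : 'I_v) := var_at (varr (nv a)) (var_row (nv a)) (var_col (nv b)).
have -> : source_mx v nv = (\matrix_(a, b) 'X_(enum_rank (E a b)))%R.
  by apply/matrixP => a b; rewrite !mxE X_var_at.
rewrite (@expo_LM_det_X _ K w w_inj v E).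
- rewrite -(sum_eq_mem _ (fun a a' av a'v => chain_inj nv_chain av a'v)).
  by apply: eq_bigr => a _; rewrite /E var_at_coords.
- move=> a a' b aa'; rewrite /E -!wt_var_at //; apply: cons_rows => //.
  + exact: nv_src.
  + exact: nv_src.
  + by case/andP: (valid_var (nv a)).
  + by case/andP: (valid_var (nv a')).
  + by have /andP [] := valid_var (nv b); rewrite nv_src.
  + by have [] := nv_chain _ _ aa' (ltn_ord a').
- move=> a b b' bb'; rewrite /E -!wt_var_at //; apply: cons_cols => //.
  + exact: nv_src.
  + by case/andP: (valid_var (nv a)).
  + by have [] := nv_chain _ _ bb' (ltn_ord b').
  + by have /andP [] := valid_var (nv b'); rewrite nv_src.
Qed.

Lemma VLM_mem (P : polyR Q K) (s : seq (Var Q)) :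
  (forall x, expo (LM w P) x = (x \in s)) -> VLM w P = [set x in s].
Proof. by move=> EP; apply/setP => x; rewrite !inE EP; case: (x \in s). Qed.

Lemma dist_sym (P R : polyR Q K) : dist w P R = dist w R P.
Proof. by rewrite /dist setUC. Qed.

Lemma divides_lcm_sym (P M N : polyR Q K) : divides_lcm w P M N -> divides_lcm w P N M.
Proof. by move=> H x; rewrite maxnC. Qed.

Lemma divides_lcm_dist_lt (P M N : polyR Q K) (sP sM sN : seq (Var Q)) :
  (forall x, expo (LM w P) x = (x \in sP)) -> (forall x, expo (LM w M) x = (x \in sM)) ->
  (forall x, expo (LM w N) x = (x \in sN)) ->
  {subset sP <= sM ++ sN} -> {subset [predI sM & sN] <= sP} ->
  (exists2 x, x \in sM & x \notin sP ++ sN) ->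
  divides_lcm w P M N /\ (dist w P N < dist w M N)%N.
Proof.
move=> EP EM EN PMN MNP [x xM xPN]; split.
  move=> y; rewrite EP EM EN; case: (boolP (y \in sP)) => // /PMN.
  by rewrite mem_cat => /orP [-> | ->]; rewrite ?leq_maxl ?leq_maxr.
rewrite /dist !(VLM_mem EP, VLM_mem EM, VLM_mem EN); apply: symdiff_card_lt.
- by apply/subsetP => y; rewrite !inE -mem_cat => /PMN.
- by apply/subsetP => y; rewrite !inE => yMN; apply: MNP.
- by apply/subsetPn; exists x; rewrite !inE // -mem_cat.
Qed.

Lemma closer_sink_minor al be u v mv nv :
  sink_chain u mv -> (forall a, a < u -> qtgt Q (varr (mv a)) = al) ->
  source_chain v nv -> (forall a, a < v -> qsrc Q (varr (nv a)) = be) ->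
  closer_chain (@var_arrow Q) (@var_row Q) (@var_col Q) u v mv nv ->
  let M := (\det (sink_mx u mv))%R in let N := (\det (source_mx v nv))%R in
  exists P, [/\ sink_minor al u P, divides_lcm w P M N & dist w P N < dist w M N].
Proof.
move=> Cm Tm Cn Sn [pv [Cp Ap PMN MNP far]] M N.
have Tp a : a < u -> qtgt Q (varr (pv a)) = al.
  move=> au; have [a' a'u Ea] := Ap a au.
  by rewrite -(Tm a' a'u); congr (qtgt Q _); apply: val_inj.
have [div lt] := divides_lcm_dist_lt (expo_LM_sink_det Cp Tp) (expo_LM_sink_det Cm Tm)
  (expo_LM_source_det Cn Sn) PMN MNP far.
by exists (\det (sink_mx u pv))%R; split=> //; apply/sink_minorP; exists pv.
Qed.

Lemma closer_source_minor al be u v mv nv :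
  sink_chain u mv -> (forall a, a < u -> qtgt Q (varr (mv a)) = al) ->
  source_chain v nv -> (forall a, a < v -> qsrc Q (varr (nv a)) = be) ->
  closer_chain (@var_arrow Q) (@var_col Q) (@var_row Q) v u nv mv ->
  let M := (\det (sink_mx u mv))%R in let N := (\det (source_mx v nv))%R in
  exists R, [/\ source_minor be v R, divides_lcm w R M N & dist w M R < dist w M N].
Proof.
move=> Cm Tm Cn Sn [rv [Cr Ar RNM NMR far]] M N.
have Sr a : a < v -> qsrc Q (varr (rv a)) = be.
  move=> av; have [a' a'v Ea] := Ar a av.
  by rewrite -(Sn a' a'v); congr (qsrc Q _); apply: val_inj.
have [div lt] := divides_lcm_dist_lt (expo_LM_source_det Cr Sr) (expo_LM_source_det Cn Sn)
  (expo_LM_sink_det Cm Tm) RNM NMR far.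
exists (\det (source_mx v rv))%R; split; first by apply/source_minorP; exists rv.
- exact: divides_lcm_sym.
- by rewrite dist_sym [dist w M N]dist_sym.
Qed.

End Minors.

Theorem proposition2p24
  (K : fieldType) (Q : quiver)
  (is_sink : pred (qV Q))
  (Hbip : forall k : 'I_(nar Q), ~~ is_sink (qsrc Q k) && is_sink (qtgt Q k))
  (w : Var Q -> nat) (Hw : consistent_order w)
  (k0 : 'I_(nar Q)) (u v : nat) (Hu : (0 < u)%N) (Hv : (0 < v)%N)
  (M N : polyR Q K)
  (HM : sink_minor (qtgt Q k0) u M) (HN : source_minor (qsrc Q k0) v N)
  (Hadj : adjacent w k0 u v M N) :
  ~ violation w M N.
Proof.
case=> pi [pj [pk [_ piM pjN pkMN [Aij Ajk Rij Cij Nij]]]].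
have [mv [Cm Tm EM]] := (sink_minorP pk _ _ _).1 HM.
have [nv [Cn Sn EN]] := (source_minorP pk _ _ _).1 HN.
subst M N.
rewrite (VLM_mem (expo_LM_sink_det K pk Hw Cm Tm)) (VLM_mem (expo_LM_source_det K pk Hw Cn Sn))
  !inE in piM pjN pkMN.
case/andP: pkMN => /in_mkseqP [ak aku Ek] /in_mkseqP [bk bkv Ek'].
case/in_mkseqP: piM => ai aiu Ei; case/in_mkseqP: pjN => bj bjv Ej.
subst pi pj pk.
have V : violation_at (@var_arrow Q) (@var_row Q) (@var_col Q) u v mv nv ai bj ak bk.
  split; split=> //; first by rewrite Aij.
  by apply: contra Nij => /eqP ->.
case: Hadj => _ noP noR.
case: (violation_closer_chain Cm Cn V) => [closer | closer].
- by apply: noP; case: (closer_sink_minor K (mv ak) Hw Cm Tm Cn Sn closer) => P [*]; exists P.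
- by apply: noR; case: (closer_source_minor K (mv ak) Hw Cm Tm Cn Sn closer) => R [*]; exists R.
Qed.
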